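(* Let $\mathfrak L_1,\dots,\mathfrak L_n,\mathfrak L$ be complete lattices and let $(\mathcal F_\alpha)_{\alpha\in\mathcal O}$ be a family with $\mathcal F_\alpha:\mathfrak L_1\times\dots\times\mathfrak L_n\to(\mathfrak L\to^+\mathfrak L)$ which is $\limsup$-pushable in all arguments (i.e. the family of maps $(\vec{\mathcal G},\mathcal X)\mapsto\mathcal F_\alpha(\vec{\mathcal G})(\mathcal X)$ is $\limsup$-pushable). Then for every $\beta\in\mathcal O$ the family $\mathcal H_\alpha:\mathfrak L_1\times\dots\times\mathfrak L_n\to\mathfrak L$, $\mathcal H_\alpha(\vec{\mathcal G})=\nu^\beta(\mathcal F_\alpha(\vec{\mathcal G}))$, is $\limsup$-pushable.
   Context: $\mathcal O$ is the set of ordinals $\le\top_{\mathsf{ord}}$ for a fixed ordinal $\top_{\mathsf{ord}}$ ($=\beth_\omega$); $\lambda$ ranges over nonzero limit ordinals in $\mathcal O$. For a complete lattice $\mathfrak L$ and $f:\mathcal O\to\mathfrak L$: $\liminf_{\alpha\to\lambda}f(\alpha)=\sup_{\alpha_0<\lambda}\inf_{\alpha_0\le\alpha<\lambda}f(\alpha)$, $\limsup_{\alpha\to\lambda}f(\alpha)=\inf_{\alpha_0<\lambda}\sup_{\alpha_0\le\alpha<\lambda}f(\alpha)$; on products of lattices these are taken componentwise. $\mathfrak L\to^+\mathfrak L$ is the set of monotone maps. For $f:\mathfrak L\to\mathfrak L$ and $g\in\mathfrak L$, transfinite iteration: $f^0(g)=g$, $f^{\alpha+1}(g)=f(f^\alpha(g))$,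 $f^\lambda(g)=\limsup_{\alpha\to\lambda}f^\alpha(g)$; $\nu^\alpha f:=f^\alpha(\top)$, $\mu^\alpha f:=f^\alpha(\bot)$. A family $(\mathcal F_\alpha)_{\alpha\in\mathcal O}$ of maps $\mathfrak K\to\mathfrak K'$ between complete lattices is $\limsup$-pushable if for every $\mathcal G:\mathcal O\to\mathfrak K$ and every nonzero limit $\lambda$: $\limsup_{\alpha\to\lambda}\mathcal F_\gamma(\mathcal G_\alpha)\sqsubseteq\mathcal F_\gamma(\limsup_{\alpha\to\lambda}\mathcal G_\alpha)$ for all $\gamma\in\mathcal O$, and $\limsup_{\alpha\to\lambda}\mathcal F_\alpha(\mathcal G_\alpha)\sqsubseteq\mathcal F_\lambda(\limsup_{\alpha\to\lambda}\mathcal G_\alpha)$. *)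

From Stdlib Require Import ClassicalEpsilon FunctionalExtensionality.
From mathcomp Require Import ssreflect ssrfun ssrbool eqtype ssrnat fintype.

Set Implicit Arguments.
Unset Strict Implicit.

Record clat := CLat {
  car :> Type;
  le : car -> car -> Prop;
  sup : (car -> Prop) -> car;
  le_refl : forall x, le x x;
  le_trans : forall x y z, le x y -> le y z -> le x z;
  le_antisym : forall x y, le x y -> le y x -> x = y;
  sup_ub : forall (S : car -> Prop) x, S x -> le x (sup S);
  sup_least : forall (S : car -> Prop) z, (forall x, S x -> le x z) -> le (sup S) z
}.
Arguments le : clear implicits.
Arguments sup : clear implicits.

Definition inf (L : clat) (S : L -> Prop) : L :=
  sup L (fun x => forall y, S y -> le L x y).
Arguments inf : clear implicits.
Definition top (L : clat) : L := sup L (fun _ => True).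
Definition bot (L : clat) : L := sup L (fun _ => False).

Section ProdLat.
Variables (n : nat) (Ls : 'I_n -> clat).
Definition prodn_le (x y : forall i, Ls i) := forall i, le (Ls i) (x i) (y i).
Definition prodn_sup (S : (forall i, Ls i) -> Prop) : forall i, Ls i :=
  fun i => sup (Ls i) (fun a => exists p, S p /\ a = p i).
Lemma prodn_le_refl x : prodn_le x x. Proof. by move=> i; apply: le_refl. Qed.
Lemma prodn_le_trans x y z : prodn_le x y -> prodn_le y z -> prodn_le x z.
Proof. by move=> h1 h2 i; apply: le_trans (h1 i) (h2 i). Qed.
Lemma prodn_le_antisym x y : prodn_le x y -> prodn_le y x -> x = y.
Proof.
move=> h1 h2; apply: functional_extensionality_dep => i.
exact: le_antisym (h1 i) (h2 i).
Qed.
Lemma prodn_sup_ub S x : S x -> prodn_le x (prodn_sup S).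
Proof. by move=> Sx i; apply: sup_ub; exists x. Qed.
Lemma prodn_sup_least S z : (forall x, S x -> prodn_le x z) -> prodn_le (prodn_sup S) z.
Proof. by move=> h i; apply: sup_least => a [p [Sp ->]]; apply: h. Qed.
Definition prodn_clat : clat :=
  CLat prodn_le_refl prodn_le_trans prodn_le_antisym prodn_sup_ub prodn_sup_least.
End ProdLat.

Section Prod2.
Variables (K L : clat).
Definition prod2_le (x y : K * L) := le K x.1 y.1 /\ le L x.2 y.2.
Definition prod2_sup (S : K * L -> Prop) : K * L :=
  (sup K (fun a => exists p, S p /\ a = p.1), sup L (fun a => exists p, S p /\ a = p.2)).
Lemma prod2_le_refl x : prod2_le x x. Proof. by split; apply: le_refl. Qed.
Lemma prod2_le_trans x y z : prod2_le x y -> prod2_le y z -> prod2_le x z.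
Proof. by move=> [a b] [c d]; split; [apply: le_trans a c | apply: le_trans b d]. Qed.
Lemma prod2_le_antisym x y : prod2_le x y -> prod2_le y x -> x = y.
Proof.
case: x => x1 x2; case: y => y1 y2 [/= a b] [/= c d].
by rewrite (le_antisym a c) (le_antisym b d).
Qed.
Lemma prod2_sup_ub S x : S x -> prod2_le x (prod2_sup S).
Proof. by move=> Sx; split; apply: sup_ub; exists x. Qed.
Lemma prod2_sup_least S z : (forall x, S x -> prod2_le x z) -> prod2_le (prod2_sup S) z.
Proof.
move=> h; split; apply: sup_least => a [p [Sp ->]]; by case: (h p Sp).
Qed.
Definition prod2_clat : clat :=
  CLat prod2_le_refl prod2_le_trans prod2_le_antisym prod2_sup_ub prod2_sup_least.
End Prod2.

Record monmap (L : clat) := MonMap {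
  mfun :> L -> L;
  mfun_mono : forall x y, le L x y -> le L (mfun x) (mfun y)
}.

Record ordinals := Ordinals {
  ord :> Type;
  olt : ord -> ord -> Prop;
  olt_wf : well_founded olt;
  olt_trans : forall a b c, olt a b -> olt b c -> olt a c;
  olt_total : forall a b, olt a b \/ a = b \/ olt b a;
  otop : ord;
  otop_max : forall a, a = otop \/ olt a otop
}.
Arguments olt : clear implicits.

Section OrdDefs.
Variable O : ordinals.
Definition ole (a b : O) := olt O a b \/ a = b.

Definition is_limit (l : O) :=
  (exists a, olt O a l) /\ (forall a, olt O a l -> exists c, olt O a c /\ olt O c l).

Definition is_pred (p a : O) :=
  olt O p a /\ ~ (exists c, olt O p c /\ olt O c a).

Definition limsup (L : clat) (f : O -> L) (l : O) : L :=
  inf L (fun y => exists a0, olt O a0 l /\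
     y = sup L (fun x => exists a, ole a0 a /\ olt O a l /\ x = f a)).

(* dependent version used inside the recursion *)
Definition limsup_dep (L : clat) (l : O) (f : forall a, olt O a l -> L) : L :=
  inf L (fun y => exists a0, olt O a0 l /\
     y = sup L (fun x => exists a (h : olt O a l), ole a0 a /\ x = f a h)).

(* Transfinite iteration f^a(g):
   f^0 g = g, f^(p+1) g = f (f^p g), f^l g = limsup_{a -> l} f^a g. *)
Definition iter_step (L : clat) (f : L -> L) (g : L)
    (a : O) (rec : forall c, olt O c a -> L) : L :=
  match excluded_middle_informative (exists p, is_pred p a) with
  | left H =>
      let p := proj1_sig (constructive_indefinite_description _ H) in
      let Hp := proj2_sig (constructive_indefinite_description _ H) in
      f (rec p (proj1 Hp))
  | right _ =>
      match excluded_middle_informative (exists c, olt O c a) with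
      | left _ => limsup_dep rec
      | right _ => g
      end
  end.

Definition titer (L : clat) (f : L -> L) (g : L) : O -> L :=
  Fix (@olt_wf O) (fun _ => car L) (iter_step f g).

Definition nu_iter (L : clat) (f : L -> L) (a : O) : L := titer f (top L) a.

Definition pushable (K K' : clat) (F : O -> K -> K') :=
  forall (G : O -> K) (l : O), is_limit l ->
    (forall c : O, le K' (limsup (fun a => F c (G a)) l) (F c (limsup G l))) /\
    le K' (limsup (fun a => F a (G a)) l) (F l (limsup G l)).
End OrdDefs.

(* Since limsup in a product is componentwise, it suffices to push limsup
   through nu^beta for a family f_alpha of monotone maps with
   limsup_alpha f_alpha(X_alpha) <= f_lambda(limsup X) for all X; this goes by
   induction on beta.  At beta = gamma + 1 take X_alpha := nu^gamma(f_alpha)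
   and use the induction hypothesis through the monotonicity of f_lambda.  At
   a limit beta the iterates nu^gamma(f) are decreasing in gamma, so
   limsup_alpha nu^beta(f_alpha) is below
   limsup_alpha nu^gamma(f_alpha) <= nu^gamma(f_lambda) for every gamma < beta,
   hence below their limsup nu^beta(f_lambda). *)

From Stdlib Require Import ClassicalEpsilon FunctionalExtensionality PropExtensionality Classical.
From mathcomp Require Import ssreflect ssrfun ssrbool eqtype ssrnat fintype.

Set Implicit Arguments.
Unset Strict Implicit.

Section LatticeFacts.
Variable L : clat.

Lemma inf_lb (S : L -> Prop) y : S y -> le L (inf L S) y.
Proof. by move=> Sy; apply: sup_least => x; apply. Qed.

Lemma inf_glb (S : L -> Prop) x : (forall y, S y -> le L x y) -> le L x (inf L S).
Proof. exact: sup_ub. Qed.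

Lemma top_max x : le L x (top L).
Proof. exact: sup_ub. Qed.

Lemma eq_sup (S T : L -> Prop) : (forall x, S x <-> T x) -> sup L S = sup L T.
Proof.
move=> ST; congr (sup L _).
by apply: functional_extensionality => x; apply: propositional_extensionality.
Qed.

End LatticeFacts.

Section Limsup.
Variable O : ordinals.

Lemma ole_refl (a : O) : ole a a.
Proof. by right. Qed.

Definition tail_sup {L : clat} (f : O -> L) (a0 l : O) : L :=
  sup L (fun x => exists a, ole a0 a /\ olt O a l /\ x = f a).

Lemma limsupE (L : clat) (f : O -> L) l :
  limsup f l = inf L (fun y => exists a0, olt O a0 l /\ y = tail_sup f a0 l).
Proof. by []. Qed.

Lemma limsup_le_tail_sup {L : clat} (f : O -> L) {a0 l : O} :
  olt O a0 l -> le L (limsup f l) (tail_sup f a0 l).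
Proof. by move=> a0l; apply: inf_lb; exists a0. Qed.

Lemma le_limsup (L : clat) (f g : O -> L) l :
  (forall a, olt O a l -> le L (f a) (g a)) -> le L (limsup f l) (limsup g l).
Proof.
move=> fg; apply: inf_glb => y [a0 [a0l ->]].
apply: le_trans (limsup_le_tail_sup f a0l) _.
apply: sup_least => x [a [a0a [al ->]]].
by apply: le_trans (fg a al) _; apply: sup_ub; exists a.
Qed.

Lemma limsup_le_antitone (L : clat) (f : O -> L) l c :
  (forall b, ole c b -> olt O b l -> le L (f b) (f c)) ->
  olt O c l -> le L (limsup f l) (f c).
Proof.
move=> anti cl; apply: le_trans (limsup_le_tail_sup f cl) _.
by apply: sup_least => x [b [cb [bl ->]]]; apply: anti.
Qed.

Lemma tail_sup_pair {K L : clat} (H : O -> prod2_clat K L) a0 l :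
  tail_sup H a0 l =
  (tail_sup (fun a => (H a).1) a0 l, tail_sup (fun a => (H a).2) a0 l).
Proof.
congr pair; apply: eq_sup => x; split.
- by move=> [_ [[a [a0a [al ->]]] ->]]; exists a.
- by move=> [a [a0a [al ->]]]; exists (H a); split=> //; exists a.
- by move=> [_ [[a [a0a [al ->]]] ->]]; exists a.
- by move=> [a [a0a [al ->]]]; exists (H a); split=> //; exists a.
Qed.

Lemma limsup_pair (K L : clat) (H : O -> prod2_clat K L) l :
  limsup H l = (limsup (fun a => (H a).1) l, limsup (fun a => (H a).2) l).
Proof.
apply: le_antisym.
- split; apply: inf_glb => y [a0 [a0l ->]];
    by have := limsup_le_tail_sup H a0l; rewrite (tail_sup_pair H) => -[].
- rewrite [limsup H l]limsupE; apply: inf_glb => y [a0 [a0l ->]].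
  rewrite (tail_sup_pair H).
  by split; apply: limsup_le_tail_sup.
Qed.

End Limsup.

Section TransfiniteIteration.
Variables (O : ordinals) (L : clat).
Implicit Types (f : L -> L) (g : L) (a c p : O).

Lemma is_pred_uniq {p q a} : is_pred p a -> is_pred q a -> p = q.
Proof.
move=> [pa np] [qa nq]; case: (olt_total p q) => [pq|[//|qp]].
- by case: np; exists q.
- by case: nq; exists p.
Qed.

Lemma is_pred_ole {p a c} : is_pred p a -> olt O c a -> ole c p.
Proof.
move=> [_ np] ca; case: (olt_total c p) => [cp|[->|pc]].
- by left.
- exact: ole_refl.
- by case: np; exists c.
Qed.

Lemma titer_fix f g a : titer f g a = @iter_step O L f g a (fun c _ => titer f g c).
Proof.
rewrite /titer Fix_eq // => x r1 r2 r12.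
congr iter_step; apply: functional_extensionality_dep => y.
by apply: functional_extensionality_dep => yx; apply: r12.
Qed.

Lemma titer_succ f g {p a} : is_pred p a -> titer f g a = f (titer f g p).
Proof.
move=> pa; rewrite titer_fix /iter_step.
case: excluded_middle_informative => [H|]; last by case; exists p.
by case: (constructive_indefinite_description _ H) => q qa /=; rewrite (is_pred_uniq qa pa).
Qed.

Lemma titer_zero f g {a} : ~ (exists c, olt O c a) -> titer f g a = g.
Proof.
move=> a_zero; rewrite titer_fix /iter_step.
case: excluded_middle_informative => [ex|_].
  by exfalso; case: ex => p [pa _]; apply: a_zero; exists p.
by case: excluded_middle_informative.
Qed.

Lemma titer_lim f g {a} :
  ~ (exists p, is_pred p a) -> (exists c, olt O c a) -> titer f g a = limsup (titer f g) a.
Proof.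
move=> nsucc a_pos; rewrite titer_fix /iter_step.
case: excluded_middle_informative => [//|_].
case: excluded_middle_informative => [_|//].
rewrite limsupE /limsup_dep; congr (sup L _).
apply: functional_extensionality => x; apply: propositional_extensionality.
suff tailE a0 : sup L (fun x => exists b (ba : olt O b a), ole a0 b /\ x = titer f g b)
              = tail_sup (titer f g) a0 a.
  by split=> xlb y [a0 [a0a ->]]; apply: xlb; exists a0; rewrite tailE.
apply: eq_sup => y; split.
- by move=> [b [ba [a0b ->]]]; exists b.
- by move=> [b [a0b [ba ->]]]; exists b, ba.
Qed.

(* The two properties must be proved together: at a limit, the post-fixpoint
   property of the earlier iterates is what makes the limsup a post-fixpoint. *)
Lemma nu_iter_postfix_antitone (f : monmap L) a :
  le L (f (nu_iter f a)) (nu_iter f a) /\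
  (forall c, olt O c a -> le L (nu_iter f a) (nu_iter f c)).
Proof.
elim/(well_founded_ind (@olt_wf O)): a => a IH; rewrite /nu_iter in IH *.
case: (classic (exists p, is_pred p a)) => [[p pa]|nsucc].
  rewrite (titer_succ _ _ pa); have [post anti] := IH p (proj1 pa).
  split; first exact: mfun_mono.
  move=> c ca; apply: le_trans post _.
  by case: (is_pred_ole pa ca) => [cp|->]; [exact: anti | exact: le_refl].
case: (classic (exists c, olt O c a)) => [a_pos|a_zero]; last first.
  by rewrite (titer_zero _ _ a_zero); split=> [|c ca]; [exact: top_max | case: a_zero; exists c].
rewrite (titer_lim _ _ nsucc a_pos).
have below c : olt O c a -> le L (limsup (titer f (top L)) a) (titer f (top L) c).
  apply: limsup_le_antitone => b [cb|<-] ba; [exact: (proj2 (IH b ba)) | exact: le_refl].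
split=> //; apply: inf_glb => y [a0 [a0a ->]].
apply: le_trans (mfun_mono f (below a0 a0a)) _.
apply: le_trans (proj1 (IH a0 a0a)) _.
by apply: sup_ub; exists a0; split; [exact: ole_refl | split].
Qed.

Lemma nu_iter_antitone (f : monmap L) c a : ole c a -> le L (nu_iter f a) (nu_iter f c).
Proof. by case=> [ca|->]; [exact: (proj2 (nu_iter_postfix_antitone f a)) | exact: le_refl]. Qed.

End TransfiniteIteration.

Section PushNu.
Variables (O : ordinals) (L : clat) (fs : O -> monmap L) (flim : monmap L) (l : O).
Hypothesis push : forall X : O -> L, le L (limsup (fun a => fs a (X a)) l) (flim (limsup X l)).

Lemma limsup_nu_iter_le (b : O) : le L (limsup (fun a => nu_iter (fs a) b) l) (nu_iter flim b).
Proof.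
elim/(well_founded_ind (@olt_wf O)): b => b IH.
case: (classic (exists p, is_pred p b)) => [[p pb]|nsucc].
  rewrite {2}/nu_iter (titer_succ _ _ pb).
  have -> : (fun a => nu_iter (fs a) b) = (fun a => fs a (nu_iter (fs a) p)).
    by apply: functional_extensionality => a; rewrite /nu_iter (titer_succ _ _ pb).
  by apply: le_trans (push _) _; apply: mfun_mono; apply: IH (proj1 pb).
case: (classic (exists c, olt O c b)) => [b_pos|b_zero]; last first.
  by rewrite {2}/nu_iter (titer_zero _ _ b_zero); apply: top_max.
rewrite {2}/nu_iter (titer_lim _ _ nsucc b_pos).
apply: inf_glb => y [c [cb ->]].
have below : forall a, olt O a l -> le L (nu_iter (fs a) b) (nu_iter (fs a) c).
  by move=> a _; apply: nu_iter_antitone; left.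
apply: le_trans (le_limsup below) _; apply: le_trans (IH c cb) _.
by apply: sup_ub; exists c; split; [exact: ole_refl | split].
Qed.

End PushNu.

Theorem lemma4p10 (O : ordinals) (n : nat) (Ls : 'I_n -> clat) (L : clat)
  (F : O -> prodn_clat Ls -> monmap L)
  (hF : pushable (K := prod2_clat (prodn_clat Ls) L) (K' := L)
                 (fun a (p : prod2_clat (prodn_clat Ls) L) => F a p.1 p.2)) :
  forall b : O,
    pushable (K := prodn_clat Ls) (K' := L)
             (fun a (G : prodn_clat Ls) => nu_iter (F a G) b).
Proof.
move=> b G l hl.
pose GX X a : prod2_clat (prodn_clat Ls) L := (G a, X a).
have limsupGX X : limsup (GX X) l = (limsup G l, limsup X l) by rewrite limsup_pair.
split.
- move=> c; apply: limsup_nu_iter_le => X.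
  by have := (hF (GX X) l hl).1 c; rewrite limsupGX.
- apply: limsup_nu_iter_le => X.
  by have := (hF (GX X) l hl).2; rewrite limsupGX.
Qed.
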